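(* Let $\mathbb{H}$ be a (normalized) quantum channel entropy and let $\mathcal{V}\in\mathrm{CPTP}(A\to B)$ be an isometry channel. Then $\mathbb{H}(B|A)_{\mathcal{V}}=-\log|A|$. In particular, every channel entropy takes negative values on isometry channels with $|A|>1$.
   Context: Systems are finite-dimensional; $\mathbf{u}^B=I^B/|B|$; $\log$ is base 2; a state is identified with a channel with trivial input. A superchannel from $\mathrm{CPTP}(A\to B)$ to $\mathrm{CPTP}(A'\to B)$ is $\Theta[\mathcal{N}]=\mathcal{E}^{RB\to B}\circ\mathcal{N}^{A\to B}\circ\mathcal{V}^{A'\to RA}$ with $\mathcal{V}$ an isometry channel and $\mathcal{E}$ a channel; it is mixing if in a realization with minimal $|R|$, $\mathcal{E}(\tau^R\otimes\mathbf{u}^B)=\mathbf{u}^B$ for every density matrix $\tau^R$. For same output, $\mathcal{N}\succ\mathcal{M}$ iff $\mathcal{M}=\Theta[\mathcal{N}]$ for a mixing $\Theta$; for $\mathcal{N}\in\mathrm{CPTP}(A\to B)$, $\mathcal{M}\in\mathrm{CPTP}(A'\to B')$: if $|B|>|B'|$, $\mathcal{N}\succ\mathcal{M}$ iff $\mathcal{N}\succ\mathcal{U}\circ\mathcal{M}$ for some isometry channel $\mathcal{U}:B'\to B$; if $|B|\le|B'|$, iff $\mathcal{W}\circ\mathcal{N}\succ\mathcal{M}$ for some isometry channel $\mathcal{W}:B\to B'$. A (normalized) channel entropy is a function $\mathcal{N}^{A\to B}\mapsto\mathbb{H}(B|A)_{\mathcal{N}}\in\mathbb{R}$ on all channels between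 finite-dimensional systems, not identically zero, such that: (monotonicity) $\mathcal{N}^{A\to B}\succ\mathcal{M}^{A'\to B'}$ implies $\mathbb{H}(B|A)_{\mathcal{N}}\le\mathbb{H}(B'|A')_{\mathcal{M}}$; (additivity) $\mathbb{H}(BB'|AA')_{\mathcal{N}\otimes\mathcal{M}}=\mathbb{H}(B|A)_{\mathcal{N}}+\mathbb{H}(B'|A')_{\mathcal{M}}$; (normalization) the uniform qubit state has entropy $1$. *)

From HB Require Import structures.
From mathcomp Require Import all_boot all_order all_algebra.
From mathcomp Require Import complex mxtens.
From mathcomp Require Import reals exp.

Set Implicit Arguments.
Unset Strict Implicit.
Unset Printing Implicit Defensive.

Import Order.TTheory GRing.Theory Num.Theory.
Local Open Scope ring_scope.

Section QuantumChannels.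
Variable R : realType.
Local Notation C := R[i].

Definition adjmx (m n : nat) (A : 'M[C]_(m, n)) : 'M[C]_(n, m) :=
  (map_mx Num.conj A)^T.

Definition psd (n : nat) (X : 'M[C]_n) : Prop :=
  forall v : 'cV[C]_n, 0 <= (adjmx v *m X *m v) 0 0.

Definition density (n : nat) (X : 'M[C]_n) : Prop := psd X /\ \tr X = 1.

Definition unif (m : nat) : 'M[C]_m := (m%:R)^-1 *: 1%:M.

Definition chan_map (n m : nat) := 'M[C]_n -> 'M[C]_m.

Definition is_linear_map (n m : nat) (N : chan_map n m) : Prop :=
  forall (a : C) (X Y : 'M[C]_n), N (a *: X + Y) = a *: N X + N Y.

(* tensor product N (x) M of linear maps, defined on matrix units
   E_{(a,b),(c,d)} = E_{ac} (x) E_{bd} and extended linearly *)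
Definition tens_map (n m n' m' : nat) (N : chan_map n m) (M : chan_map n' m')
  : chan_map (n * n') (m * m') :=
  fun X => \sum_(i < n * n') \sum_(j < n * n')
     X i j *: (N (delta_mx (mxtens_unindex i).1 (mxtens_unindex j).1)
               *t M (delta_mx (mxtens_unindex i).2 (mxtens_unindex j).2)).

Definition id_map (k : nat) : chan_map k k := fun X => X.

Definition completely_positive (n m : nat) (N : chan_map n m) : Prop :=
  forall (k : nat) (X : 'M[C]_(k * n)), psd X -> psd (tens_map (@id_map k) N X).

Definition trace_preserving (n m : nat) (N : chan_map n m) : Prop :=
  forall X : 'M[C]_n, \tr (N X) = \tr X.

Definition CPTP (n m : nat) (N : chan_map n m) : Prop :=
  [/\ is_linear_map N, completely_positive N & trace_preserving N].

(* is_isometry V : C^n -> C^m (column-vector convention) and its channel *)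
Definition is_isometry (m n : nat) (V : 'M[C]_(m, n)) : Prop :=
  adjmx V *m V = 1%:M.

Definition iso_chan (m n : nat) (V : 'M[C]_(m, n)) : chan_map n m :=
  fun X => V *m X *m adjmx V.

(* a state of B, as a channel with trivial (1-dimensional) input:
   the uniform state X |-> tr(X) u^B *)
Definition uniform_state (m : nat) : chan_map 1 m :=
  fun X => \tr X *: unif m.

(* Superchannel Theta[N] = E o (id_R (x) N) o V with |R| = k,
   V : A' -> R A an is_isometry (channel), E : R B -> B a channel. *)
Definition superchan_apply (k n' n m : nat) (V : 'M[C]_(k * n, n'))
  (E : chan_map (k * m) m) (N : chan_map n m) : chan_map n' m :=
  fun X => E (tens_map (@id_map k) N (iso_chan V X)).

Definition realization (k n' n m : nat) (V : 'M[C]_(k * n, n'))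
  (E : chan_map (k * m) m) : Prop :=
  [/\ (0 < k)%N, is_isometry V & CPTP E].

Definition minimal_realization (k n' n m : nat) (V : 'M[C]_(k * n, n'))
  (E : chan_map (k * m) m) : Prop :=
  realization V E /\
  forall (k' : nat) (V' : 'M[C]_(k' * n, n')) (E' : chan_map (k' * m) m),
    realization V' E' ->
    (forall N : chan_map n m, CPTP N ->
       forall X, superchan_apply V E N X = superchan_apply V' E' N X) ->
    (k <= k')%N.

Definition mixing_realization (k n' n m : nat) (V : 'M[C]_(k * n, n'))
  (E : chan_map (k * m) m) : Prop :=
  minimal_realization V E /\
  forall tau : 'M[C]_k, density tau -> E (tau *t unif m) = unif m.

Definition majorizes_same (n n' m : nat) (N : chan_map n m) (M : chan_map n' m)
  : Prop :=
  exists (k : nat) (V : 'M[C]_(k * n, n')) (E : chan_map (k * m) m),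
    mixing_realization V E /\ forall X, M X = superchan_apply V E N X.

Definition majorizes (n m n' m' : nat) (N : chan_map n m) (M : chan_map n' m')
  : Prop :=
  if (m' < m)%N then
    exists U : 'M[C]_(m, m'), is_isometry U /\
      majorizes_same N (fun X => iso_chan U (M X))
  else
    exists W : 'M[C]_(m', m), is_isometry W /\
      majorizes_same (fun X => iso_chan W (N X)) M.

Definition channel_entropy (H : forall n m : nat, chan_map n m -> R) : Prop :=
  [/\ (exists (n m : nat) (N : chan_map n m),
         [/\ (0 < n)%N, (0 < m)%N, CPTP N & H n m N <> 0]),
      (forall (n m n' m' : nat) (N : chan_map n m) (M : chan_map n' m'),
         (0 < n)%N -> (0 < m)%N -> (0 < n')%N -> (0 < m')%N ->
         CPTP N -> CPTP M -> majorizes N M -> H n m N <= H n' m' M),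
      (forall (n m n' m' : nat) (N : chan_map n m) (M : chan_map n' m'),
         (0 < n)%N -> (0 < m)%N -> (0 < n')%N -> (0 < m')%N ->
         CPTP N -> CPTP M ->
         H (n * n')%N (m * m')%N (tens_map N M) = H n m N + H n' m' M)
    & H 1%N 2%N (uniform_state 2) = 1].

Definition log2 (x : R) : R := ln x / ln 2.

End QuantumChannels.

From HB Require Import structures.
From mathcomp Require Import all_boot all_order all_algebra.
From mathcomp Require Import complex mxtens.
From mathcomp Require Import reals exp.
From mathcomp Require Import ring lra.
From Stdlib Require Import FunctionalExtensionality.
Import Order.TTheory GRing.Theory Num.Theory.
Local Open Scope ring_scope.

Set Implicit Arguments.
Unset Strict Implicit.
Unset Printing Implicit Defensive.

(** Let f(k) be the entropy of the identity channel on a k-dimensional system.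
   Additivity gives f(ab) = f(a) + f(b), and id_a majorizes id_b for b <= a
   (pre-composition with an isometric embedding), so f is antitone; squeezing
   n^j between consecutive powers of 2 then yields f(n) = f(2) log2 n.  An
   isometry channel V : A -> B and id_A majorize each other, so H(V) = f(|A|).
   It remains to show f(2) = -1.  By teleportation the Bell state majorizes
   id_2 (x) u_2, whence 0 = H(Bell) <= f(2) + 1.  Conversely, using the
   classical uniform register of u_4 to pick a local unitary fixing the Bell
   state, id_2 (x) u_4 majorizes T (x) u_2 for the Bell twirl T, and T
   majorizes the trivial channel since it fixes the Bell state; hence
   f(2) + 2 <= H(T) + 1 <= 1. *)

(** * Tensor products and adjoints *)

Section Tensor.
Variable K : comNzRingType.

Lemma mxtens_index_eq m n (i k : 'I_m) (j l : 'I_n) :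
  (mxtens_index (i, j) == mxtens_index (k, l)) = (i == k) && (j == l).
Proof. by rewrite (can_eq (@mxtens_indexK m n)) xpair_eqE. Qed.

Lemma tensmx_suml (I : finType) m n p q (F : I -> 'M[K]_(m, n)) (B : 'M[K]_(p, q)) :
  (\sum_i F i) *t B = \sum_i (F i *t B).
Proof.
apply/matrixP => i j; rewrite summxE mxE summxE mulr_suml.
by apply: eq_bigr => k _; rewrite !mxE.
Qed.

Lemma tensmx_sumr (I : finType) m n p q (A : 'M[K]_(m, n)) (F : I -> 'M[K]_(p, q)) :
  A *t (\sum_i F i) = \sum_i (A *t F i).
Proof.
apply/matrixP => i j; rewrite summxE mxE summxE mulr_sumr.
by apply: eq_bigr => k _; rewrite !mxE.
Qed.

Lemma tensmxZl m n p q (c : K) (A : 'M[K]_(m, n)) (B : 'M[K]_(p, q)) :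
  (c *: A) *t B = c *: (A *t B).
Proof. by apply/matrixP => i j; rewrite !mxE mulrA. Qed.

Lemma tensmxZr m n p q (c : K) (A : 'M[K]_(m, n)) (B : 'M[K]_(p, q)) :
  A *t (c *: B) = c *: (A *t B).
Proof. by apply/matrixP => i j; rewrite !mxE mulrCA. Qed.

Lemma tensmx11 m n : (1%:M : 'M[K]_m) *t (1%:M : 'M[K]_n) = 1%:M.
Proof.
apply/matrixP => i j.
case: (mxtens_indexP i) => i1 i2; case: (mxtens_indexP j) => j1 j2.
by rewrite tensmxE !mxE mxtens_index_eq -natrM mulnb.
Qed.

Lemma delta_mx_tens m n (i j : 'I_(m * n)) :
  delta_mx i j = delta_mx (mxtens_unindex i).1 (mxtens_unindex j).1
                 *t (delta_mx (mxtens_unindex i).2 (mxtens_unindex j).2 : 'M[K]_n).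
Proof.
case: (mxtens_indexP i) => i1 i2; case: (mxtens_indexP j) => j1 j2.
rewrite !mxtens_indexK /=; apply/matrixP => k l.
case: (mxtens_indexP k) => k1 k2; case: (mxtens_indexP l) => l1 l2.
rewrite tensmxE !mxE !mxtens_index_eq -natrM mulnb.
by case: (k1 == i1); case: (k2 == i2); case: (l1 == j1); case: (l2 == j2).
Qed.

Lemma castmx_id_dep m n (e : (m = m) * (n = n)) (A : 'M[K]_(m, n)) : castmx e A = A.
Proof. by apply/matrixP => i j; rewrite castmxE !cast_ord_id. Qed.

Lemma tensmx1A m n p q (A : 'M[K]_(m, n)) :
  (A *t (1%:M : 'M_p)) *t (1%:M : 'M_q)
  = castmx (mulnA m p q, mulnA n p q) (A *t (1%:M : 'M_(p * q))).
Proof.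
apply/matrixP => i j; rewrite castmxE.
case: (mxtens_indexP i) => i12 i3; case: (mxtens_indexP i12) => i1 i2.
case: (mxtens_indexP j) => j12 j3; case: (mxtens_indexP j12) => j1 j2.
have cast_tens r s t (a : 'I_r) (b : 'I_s) (c : 'I_t) (e : (r * (s * t) = r * s * t)%N) :
    cast_ord (esym e) (mxtens_index (mxtens_index (a, b), c))
    = mxtens_index (a, mxtens_index (b, c)).
  by apply: val_inj; rewrite /= mulnDl -addnA -mulnA.
by rewrite !cast_tens !tensmxE !mxE !mxtens_index_eq -mulrA -natrM mulnb.
Qed.

End Tensor.

Section Adjoint.
Variable R : realType.
Local Notation C := R[i].

Lemma adjmxE m n (A : 'M[C]_(m, n)) i j : adjmx A i j = (A j i)^*.
Proof. by rewrite /adjmx !mxE. Qed.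

Lemma adjmxM m n p (A : 'M[C]_(m, n)) (B : 'M[C]_(n, p)) :
  adjmx (A *m B) = adjmx B *m adjmx A.
Proof.
apply/matrixP => i j; rewrite !adjmxE !mxE rmorph_sum; apply: eq_bigr => k _.
by rewrite !adjmxE rmorphM mulrC.
Qed.

Lemma adjmxK m n (A : 'M[C]_(m, n)) : adjmx (adjmx A) = A.
Proof. by apply/matrixP => i j; rewrite !adjmxE conjCK. Qed.

Lemma adjmxZ m n (c : C) (A : 'M[C]_(m, n)) : adjmx (c *: A) = c^* *: adjmx A.
Proof. by apply/matrixP => i j; rewrite !mxE rmorphM. Qed.

Lemma adjmx0 m n : adjmx (0 : 'M[C]_(m, n)) = 0.
Proof. by apply/matrixP => i j; rewrite !mxE rmorph0. Qed.

Lemma adjmx1 n : adjmx (1%:M : 'M[C]_n) = 1%:M.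
Proof. by apply/matrixP => i j; rewrite !mxE rmorph_nat eq_sym. Qed.

Lemma adjmx_tens m n p q (A : 'M[C]_(m, n)) (B : 'M[C]_(p, q)) :
  adjmx (A *t B) = adjmx A *t adjmx B.
Proof. by apply/matrixP => i j; rewrite !mxE rmorphM. Qed.

Lemma adjmx_delta_col n (i : 'I_n) : adjmx (delta_mx i 0 : 'M[C]_(n, 1)) = delta_mx 0 i.
Proof. by apply/matrixP => a b; rewrite !mxE rmorph_nat andbC. Qed.

Lemma delta_col_dot n (i j : 'I_n) :
  adjmx (delta_mx i 0 : 'M[C]_(n, 1)) *m delta_mx j 0 = (i == j)%:R *: 1%:M.
Proof.
rewrite adjmx_delta_col mul_delta_mx_cond; apply/matrixP => a b.
by rewrite !ord1 mulmxnE !mxE eqxx mulr1.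
Qed.

Lemma sum_delta_col_outer n :
  \sum_(c < n) (delta_mx c 0 : 'M[C]_(n, 1)) *m adjmx (delta_mx c 0) = 1%:M.
Proof.
rewrite (eq_bigr (fun c => delta_mx c c)); last first.
  by move=> c _; rewrite adjmx_delta_col mul_delta_mx.
by rewrite mx1_sum_delta.
Qed.

Lemma sumr_inv_nat n : (0 < n)%N -> \sum_(i < n) (n%:R^-1 : C) = 1.
Proof. by move=> hn; rewrite sumr_const card_ord -[_ *+ n]mulr_natl mulfV // pnatr_eq0 -lt0n. Qed.

Lemma tens1_delta_col_dot n d (c c' : 'I_d) :
  adjmx ((1%:M : 'M[C]_n) *t (delta_mx c 0 : 'M[C]_(d, 1))) *m (1%:M *t delta_mx c' 0)
  = (c == c')%:R *: 1%:M.
Proof. by rewrite adjmx_tens adjmx1 tensmx_mul mul1mx delta_col_dot tensmxZr tensmx11. Qed.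

Lemma tens1_delta_col_outer n d (c : 'I_d) :
  ((1%:M : 'M[C]_n) *t (delta_mx c 0 : 'M[C]_(d, 1))) *m adjmx (1%:M *t delta_mx c 0)
  = 1%:M *t (delta_mx c 0 *m adjmx (delta_mx c 0 : 'M[C]_(d, 1))).
Proof. by rewrite adjmx_tens adjmx1 tensmx_mul mul1mx. Qed.

Lemma isometry_leq m n (V : 'M[C]_(m, n)) : is_isometry V -> (n <= m)%N.
Proof. by move=> hV; have := mulmx_max_rank (adjmx V) V; rewrite hV mxrank1. Qed.

Lemma isometry1 n : is_isometry (1%:M : 'M[C]_n).
Proof. by rewrite /is_isometry adjmx1 mulmx1. Qed.

End Adjoint.

(** * Kraus maps *)

Section Kraus.
Variable R : realType.
Local Notation C := R[i].

Lemma sumr_pair (V : nmodType) (I J : finType) (F : I * J -> V) :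
  \sum_p F p = \sum_i \sum_j F (i, j).
Proof. by rewrite (pair_bigA _ (fun i j => F (i, j))); apply: eq_bigr => -[i j]. Qed.

Definition kraus (I : finType) n m (c : I -> C) (A : I -> 'M[C]_(m, n))
  : chan_map R n m := fun X => \sum_i c i *: (A i *m X *m adjmx (A i)).

Definition kraus_cptp (I : finType) n m (c : I -> C) (A : I -> 'M[C]_(m, n)) :=
  (forall i, 0 <= c i) /\ \sum_i c i *: (adjmx (A i) *m A i) = 1%:M.

Lemma kraus_linear (I : finType) n m (c : I -> C) (A : I -> 'M[C]_(m, n)) :
  is_linear_map (kraus c A).
Proof.
move=> a X Y; rewrite /kraus scaler_sumr -big_split /=; apply: eq_bigr => i _.
by rewrite mulmxDr mulmxDl scalerDr -scalemxAr -scalemxAl !scalerA mulrC.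
Qed.

Lemma psd_conj n m (B : 'M[C]_(m, n)) (X : 'M[C]_n) :
  psd X -> psd (B *m X *m adjmx B).
Proof.
move=> hX v.
have -> : adjmx v *m (B *m X *m adjmx B) *m v
          = adjmx (adjmx B *m v) *m X *m (adjmx B *m v).
  by rewrite adjmxM adjmxK !mulmxA.
exact: hX.
Qed.

Lemma psd_kraus (I : finType) n m (c : I -> C) (A : I -> 'M[C]_(m, n)) X :
  (forall i, 0 <= c i) -> psd X -> psd (kraus c A X).
Proof.
move=> hc hX v; rewrite mulmx_sumr mulmx_suml summxE; apply: sumr_ge0 => i _.
by rewrite -scalemxAr -scalemxAl mxE mulr_ge0 //; apply: psd_conj.
Qed.

Lemma mxtrace_kraus (I : finType) n m (c : I -> C) (A : I -> 'M[C]_(m, n)) X :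
  \tr (kraus c A X) = \tr ((\sum_i c i *: (adjmx (A i) *m A i)) *m X).
Proof.
rewrite /kraus mulmx_suml !raddf_sum /=; apply: eq_bigr => i _.
by rewrite -scalemxAl !mxtraceZ mxtrace_mulC mulmxA.
Qed.

Lemma kraus_sum_delta (I : finType) n m (c : I -> C) (A : I -> 'M[C]_(m, n)) X :
  kraus c A X = \sum_i \sum_j X i j *: kraus c A (delta_mx i j).
Proof.
rewrite {1}[X]matrix_sum_delta /kraus.
under eq_bigr => k _ do rewrite mulmx_sumr mulmx_suml scaler_sumr.
rewrite exchange_big; apply: eq_bigr => i _ /=.
under eq_bigr => k _ do rewrite mulmx_sumr mulmx_suml scaler_sumr.
rewrite exchange_big; apply: eq_bigr => j _ /=.
rewrite scaler_sumr; apply: eq_bigr => k _.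
by rewrite -scalemxAr -scalemxAl !scalerA mulrC.
Qed.

Lemma kraus_tensmx n m n' m' (I J : finType) (c : I -> C) (A : I -> 'M[C]_(m, n))
    (d : J -> C) (B : J -> 'M[C]_(m', n')) X Y :
  kraus c A X *t kraus d B Y
  = kraus (fun p : I * J => c p.1 * d p.2) (fun p => A p.1 *t B p.2) (X *t Y).
Proof.
rewrite /kraus sumr_pair tensmx_suml; apply: eq_bigr => i _.
rewrite tensmx_sumr; apply: eq_bigr => j _ /=.
by rewrite tensmxZl tensmxZr scalerA adjmx_tens !tensmx_mul.
Qed.

Lemma tens_map_kraus n m n' m' (N : chan_map R n m) (M : chan_map R n' m')
    (I J : finType) (c : I -> C) (A : I -> 'M[C]_(m, n))
    (d : J -> C) (B : J -> 'M[C]_(m', n')) :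
  N =1 kraus c A -> M =1 kraus d B ->
  tens_map N M =1 kraus (fun p : I * J => c p.1 * d p.2) (fun p => A p.1 *t B p.2).
Proof.
move=> hN hM Y; rewrite [RHS]kraus_sum_delta; apply: eq_bigr => i _.
by apply: eq_bigr => j _; rewrite hN hM kraus_tensmx -delta_mx_tens.
Qed.

Lemma kraus_comp (I J : finType) n m p (c : I -> C) (A : I -> 'M[C]_(m, n))
    (d : J -> C) (B : J -> 'M[C]_(p, m)) X :
  kraus d B (kraus c A X)
  = kraus (fun q : J * I => d q.1 * c q.2) (fun q => B q.1 *m A q.2) X.
Proof.
rewrite /kraus sumr_pair; apply: eq_bigr => j _.
rewrite mulmx_sumr mulmx_suml scaler_sumr; apply: eq_bigr => i _.
by rewrite -scalemxAr -scalemxAl scalerA adjmxM !mulmxA.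
Qed.

Lemma id_map_kraus k :
  @id_map R k =1 kraus (fun _ : 'I_1 => 1) (fun _ => (1%:M : 'M[C]_k)).
Proof. by move=> X; rewrite /kraus big_ord1 scale1r mul1mx adjmx1 mulmx1. Qed.

Lemma iso_chan_kraus m n (V : 'M[C]_(m, n)) :
  iso_chan V =1 kraus (fun _ : 'I_1 => 1) (fun _ => V).
Proof. by move=> X; rewrite /kraus big_ord1 scale1r. Qed.

Lemma uniform_state_kraus d :
  @uniform_state R d
  =1 kraus (fun _ : 'I_d => d%:R^-1) (fun i => (delta_mx i 0 : 'M[C]_(d, 1))).
Proof.
move=> X; rewrite /uniform_state /unif /kraus [X]mx11_scalar.
rewrite /mxtrace big_ord1 mxE eqxx mulr1n scalerA -(sum_delta_col_outer R d).
rewrite scaler_sumr; apply: eq_bigr => i _.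
by rewrite mul_mx_scalar -scalemxAl scalerA mulrC.
Qed.

Lemma CPTP_kraus (I : finType) n m (c : I -> C) (A : I -> 'M[C]_(m, n)) :
  kraus_cptp c A -> CPTP (kraus c A).
Proof.
move=> [hc h1]; split; first exact: kraus_linear.
- move=> k X hX.
  rewrite (tens_map_kraus (@id_map_kraus k) (fun Y => erefl)).
  by apply: psd_kraus => // p; rewrite mul1r.
- by move=> X; rewrite mxtrace_kraus h1 mul1mx.
Qed.

Lemma CPTP_eq_kraus (I : finType) n m (N : chan_map R n m) (c : I -> C)
    (A : I -> 'M[C]_(m, n)) :
  N =1 kraus c A -> kraus_cptp c A -> CPTP N.
Proof. by move=> /functional_extensionality ->; apply: CPTP_kraus. Qed.

Lemma kraus_cptp_tens n m n' m' (I J : finType) (c : I -> C) (A : I -> 'M[C]_(m, n))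
    (d : J -> C) (B : J -> 'M[C]_(m', n')) :
  kraus_cptp c A -> kraus_cptp d B ->
  kraus_cptp (fun p : I * J => c p.1 * d p.2) (fun p => A p.1 *t B p.2).
Proof.
move=> [hc sA] [hd sB]; split=> [p|]; first exact: mulr_ge0.
rewrite sumr_pair -tensmx11 -sA -sB tensmx_suml; apply: eq_bigr => i _.
rewrite tensmx_sumr; apply: eq_bigr => j _ /=.
by rewrite adjmx_tens tensmx_mul tensmxZl tensmxZr scalerA.
Qed.

Lemma kraus_cptp_iso m n (V : 'M[C]_(m, n)) :
  is_isometry V -> kraus_cptp (fun _ : 'I_1 => 1) (fun _ => V).
Proof. by move=> hV; split=> [_|]; rewrite ?ler01 // big_ord1 scale1r. Qed.

Lemma kraus_cptp_uniform d : (0 < d)%N ->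
  kraus_cptp (fun _ : 'I_d => d%:R^-1) (fun i => (delta_mx i 0 : 'M[C]_(d, 1))).
Proof.
move=> hd; split=> [_|]; first by rewrite invr_ge0 ler0n.
under eq_bigr => i _ do rewrite delta_col_dot eqxx scale1r.
by rewrite -scaler_suml sumr_inv_nat // scale1r.
Qed.

Lemma CPTP_id n : CPTP (@id_map R n).
Proof. exact: CPTP_eq_kraus (@id_map_kraus n) (kraus_cptp_iso (isometry1 R n)). Qed.

Lemma CPTP_iso_chan m n (V : 'M[C]_(m, n)) : is_isometry V -> CPTP (iso_chan V).
Proof. by move=> hV; apply: CPTP_eq_kraus (iso_chan_kraus V) (kraus_cptp_iso hV). Qed.

Lemma CPTP_uniform_state d : (0 < d)%N -> CPTP (@uniform_state R d).
Proof. by move=> hd; apply: CPTP_eq_kraus (@uniform_state_kraus d) (kraus_cptp_uniform hd). Qed.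

Lemma superchan_apply_kraus k n' n m (V : 'M[C]_(k * n, n')) (E : chan_map R (k * m) m)
    (N : chan_map R n m) (I J : finType) (c : I -> C) (A : I -> 'M[C]_(m, n))
    (d : J -> C) (B : J -> 'M[C]_(m, k * m)) X :
  N =1 kraus c A -> E =1 kraus d B ->
  superchan_apply V E N X
  = \sum_j \sum_i (d j * c i) *: ((B j *m (1%:M *t A i) *m V) *m X
                                  *m adjmx (B j *m (1%:M *t A i) *m V)).
Proof.
move=> hN hE; rewrite /superchan_apply hE.
rewrite (tens_map_kraus (@id_map_kraus k) hN) iso_chan_kraus !kraus_comp.
rewrite /kraus !sumr_pair; apply: eq_bigr => j _.
rewrite (@sumr_pair _ 'I_1 I) big_ord1; apply: eq_bigr => i _.
by rewrite big_ord1 /= mul1r mulr1.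
Qed.

End Kraus.

(** * Majorization by pre-composition with isometries *)

Section Majorization.
Variable R : realType.
Local Notation C := R[i].

Definition rect1mx p q : 'M[C]_(p, q) := \matrix_(i, j) ((i : nat) == j)%:R.

Lemma adjmx_rect1mx p q : adjmx (rect1mx p q) = rect1mx q p.
Proof. by apply/matrixP => i j; rewrite !mxE rmorph_nat eq_sym. Qed.

Lemma rect1mx_isometry p q : (q <= p)%N -> is_isometry (rect1mx p q).
Proof.
move=> hqp; rewrite /is_isometry adjmx_rect1mx; apply/matrixP => i j.
rewrite !mxE (bigD1 (widen_ord hqp i)) //= big1 ?addr0; first by rewrite !mxE eqxx mul1r.
move=> k hk; rewrite !mxE; case: eqP => [hik|]; last by rewrite mul0r.
by case/eqP: hk; apply: val_inj.
Qed.

Lemma rect1mx_mull p q r (M : 'M[C]_(q, r)) (e : q = p) :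
  rect1mx p q *m M = castmx (e, erefl) M.
Proof.
apply/matrixP => i j; rewrite castmxE mxE (bigD1 (cast_ord (esym e) i)) //=.
rewrite big1 ?addr0; first by rewrite !mxE eqxx mul1r cast_ord_id.
move=> k hk; rewrite !mxE; case: eqP => [hik|]; last by rewrite mul0r.
by case/eqP: hk; apply: val_inj.
Qed.

Lemma rect1mx_mulr p q r (M : 'M[C]_(r, q)) (e : q = p) :
  M *m rect1mx q p = castmx (erefl, e) M.
Proof.
apply/matrixP => i j; rewrite castmxE mxE (bigD1 (cast_ord (esym e) j)) //=.
rewrite big1 ?addr0; first by rewrite !mxE eqxx mulr1 cast_ord_id.
move=> k hk; rewrite !mxE; case: eqP => [hkj|]; last by rewrite mulr0.
by case/eqP: hk; apply: val_inj.
Qed.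

Lemma rect1mx_tens1mx m n (A : 'M[C]_(m, n)) :
  rect1mx m (1 * m) *m (1%:M *t A) *m rect1mx (1 * n) n = A.
Proof.
rewrite tens_scalar1mx (rect1mx_mull _ (mul1n m)) (rect1mx_mulr _ (mul1n n)).
by rewrite !castmx_comp castmx_id_dep.
Qed.

Lemma isometry_mul m n p (U : 'M[C]_(m, n)) (V : 'M[C]_(n, p)) :
  is_isometry U -> is_isometry V -> is_isometry (U *m V).
Proof.
rewrite /is_isometry adjmxM => hU hV.
by rewrite mulmxA -(mulmxA (adjmx V)) hU mulmx1.
Qed.

Lemma iso_chan1 n (X : 'M[C]_n) : iso_chan 1%:M X = X.
Proof. by rewrite /iso_chan mul1mx adjmx1 mulmx1. Qed.

Lemma density1 (tau : 'M[C]_1) : density tau -> tau = 1%:M.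
Proof.
move=> [_ htr]; rewrite [tau]mx11_scalar; congr (_%:M).
by move: htr; rewrite /mxtrace big_ord1.
Qed.

(* Realized with a one-dimensional memory, which is trivially minimal and
   mixing. *)
Lemma majorizes_same_comp_iso n n' m (N : chan_map R n m) (M : chan_map R n' m)
    (I : finType) (c : I -> C) (A : I -> 'M[C]_(m, n)) (V : 'M[C]_(n, n')) :
  N =1 kraus c A -> is_isometry V -> (forall X, M X = N (iso_chan V X)) ->
  majorizes_same N M.
Proof.
move=> hN hV hM.
have hE := @iso_chan_kraus R _ _ (rect1mx m (1 * m)).
exists 1%N, (rect1mx (1 * n) n *m V), (iso_chan (rect1mx m (1 * m))).
split; first split; first split.
- split=> //; first by apply: isometry_mul => //; apply: rect1mx_isometry; rewrite mul1n.
  by apply: CPTP_iso_chan; apply: rect1mx_isometry; rewrite mul1n.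
- by move=> k' V' E' [].
- move=> tau /density1 ->.
  by rewrite /iso_chan adjmx_rect1mx; apply: rect1mx_tens1mx.
- move=> X; rewrite hM hN (superchan_apply_kraus _ X hN hE) big_ord1 /kraus /iso_chan.
  by apply: eq_bigr => i _; rewrite mul1r !mulmxA rect1mx_tens1mx adjmxM !mulmxA.
Qed.

Lemma majorizes_same_eq n m (N M : chan_map R n m) (I : finType) (c : I -> C)
    (A : I -> 'M[C]_(m, n)) :
  N =1 kraus c A -> M =1 N -> majorizes_same N M.
Proof.
by move=> hN hM; apply: majorizes_same_comp_iso hN (isometry1 R n) _ => X; rewrite iso_chan1.
Qed.

Lemma majorizes_of_same n n' m (N : chan_map R n m) (M : chan_map R n' m) :
  majorizes_same N M -> majorizes N M.
Proof.
rewrite /majorizes ltnn => hNM; exists 1%:M; split; first exact: isometry1.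
by rewrite (_ : (fun X => _) = N) //; apply: functional_extensionality => X; rewrite iso_chan1.
Qed.

Lemma majorizes_id_iso_chan m n (V : 'M[C]_(m, n)) :
  is_isometry V -> majorizes (@id_map R n) (iso_chan V).
Proof.
move=> hV; rewrite /majorizes ltnNge (isometry_leq hV) /=.
by exists V; split => //; exact: majorizes_same_eq (iso_chan_kraus V) _.
Qed.

Lemma majorizes_iso_chan_id m n (V : 'M[C]_(m, n)) :
  is_isometry V -> majorizes (iso_chan V) (@id_map R n).
Proof.
move=> hV; rewrite /majorizes.
case: ltnP => [_|hmn].
  by exists V; split => //; exact: majorizes_same_eq (iso_chan_kraus V) _.
have emn : m = n by apply/eqP; rewrite eqn_leq hmn (isometry_leq hV).
subst m; exists (adjmx V); split; first by rewrite /is_isometry adjmxK mulmx1C.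
have hVV X : iso_chan (adjmx V) (iso_chan V X) = X.
  by rewrite /iso_chan adjmxK !mulmxA hV mul1mx -mulmxA hV mulmx1.
apply: majorizes_same_eq => [X|X]; last by rewrite hVV.
by rewrite hVV; apply: id_map_kraus.
Qed.

Lemma majorizes_id_id a b : (b < a)%N -> majorizes (@id_map R a) (@id_map R b).
Proof.
move=> hba; rewrite /majorizes hba; have hU := rect1mx_isometry (ltnW hba).
by exists (rect1mx a b); split => //; apply: majorizes_same_comp_iso (@id_map_kraus R a) hU _.
Qed.

Lemma minimal_realization_dim k n' n m (V : 'M[C]_(k * n, n')) (E : chan_map R (k * m) m) :
  (0 < n)%N -> n' = (k * n)%N -> realization V E -> minimal_realization V E.
Proof.
move=> hn e hVE; split=> // k' V' E' [_ hV' _] _.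
by rewrite -(leq_pmul2r hn) -e (isometry_leq hV').
Qed.

End Majorization.

(** * Additive antitone functions on the positive integers *)

Lemma norm_mul_natr_le1_eq0 (R : archiRealFieldType) (z : R) :
  (forall j, (0 < j)%N -> `|z| * j%:R <= 1) -> z = 0.
Proof.
move=> hz; apply/eqP/negPn/negP => z0; rewrite -normr_gt0 in z0.
have := truncnS_gt `|z|^-1; rewrite -(ltr_pM2l z0) mulfV ?gt_eqF // => hlt.
by have := hz (Num.truncn `|z|^-1).+1 isT; rewrite leNgt hlt.
Qed.

Section LogCharacterization.
Variable R : realType.
Variable f : nat -> R.
Hypothesis f_mul : forall a b, (0 < a)%N -> (0 < b)%N -> f (a * b)%N = f a + f b.
Hypothesis f_antitone : forall a b, (0 < b)%N -> (b <= a)%N -> f a <= f b.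
Hypothesis f2 : f 2%N = -1.

Lemma additive_at1 : f 1%N = 0.
Proof. by have := @f_mul 1%N 1%N isT isT; rewrite muln1 => h; lra. Qed.

Lemma additive_expn a j : (0 < a)%N -> f (a ^ j)%N = f a * j%:R.
Proof.
move=> ha; elim: j => [|j IH]; first by rewrite expn0 additive_at1 mulr0.
by rewrite expnS f_mul ?expn_gt0 ?ha // IH mulrSr mulrDr mulr1 addrC.
Qed.

(* Sandwich [n ^ j] between consecutive powers of 2. *)
Lemma additive_antitone_log2_bound n j : (0 < n)%N -> (0 < j)%N ->
  `|f n + log2 (n%:R : R)| * j%:R <= 1.
Proof.
move=> hn hj; have hnj : (0 < n ^ j)%N by rewrite expn_gt0 hn.
have := trunc_log_bounds (isT : (1 < 2)%N) hnj.
set l := trunc_log 2 (n ^ j) => /andP [hlo hhi]; clearbody l.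
have e1 : f (n ^ j)%N <= f (2 ^ l)%N by apply: f_antitone; rewrite ?expn_gt0.
have e2 : f (2 ^ l.+1)%N <= f (n ^ j)%N by apply: f_antitone => //; exact: ltnW.
rewrite !additive_expn // f2 in e1 e2.
have ln2 : 0 < ln (2 : R) by apply: ln_gt0; lra.
have lnX k i : (0 < k)%N -> ln ((k ^ i)%:R : R) = ln (k%:R : R) * i%:R.
  by move=> hk; rewrite natrX lnXn ?ltr0n // mulr_natr.
have l1 : ln 2 * l%:R <= ln (n%:R : R) * j%:R.
  by rewrite -!lnX // ler_ln ?posrE ?ltr0n ?expn_gt0 ?hn // ler_nat.
have l2 : ln (n%:R : R) * j%:R < ln 2 * l.+1%:R.
  by rewrite -!lnX // ltNge ler_ln ?posrE ?ltr0n ?expn_gt0 ?hn // ler_nat -ltnNge.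
have ey : ln (n%:R : R) = log2 (n%:R : R) * ln 2 by rewrite /log2 mulfVK ?gt_eqF.
rewrite ey in l1 l2; move: (log2 _) l1 l2 => y l1 l2.
have yl : (l%:R : R) <= y * j%:R by nra.
have yu : y * j%:R < (l%:R : R) + 1 by rewrite -natr1 in l2; nra.
rewrite -natr1 in e2; rewrite -(ger0_norm (ler0n R j)) -normrM mulrDl ler_norml.
by apply/andP; split; lra.
Qed.

Lemma additive_antitone_log2 n : (0 < n)%N -> f n = - log2 (n%:R : R).
Proof.
move=> hn; apply/eqP; rewrite -subr_eq0 opprK; apply/eqP.
by apply: norm_mul_natr_le1_eq0 => j hj; apply: additive_antitone_log2_bound.
Qed.

End LogCharacterization.

(** * Entropy of identity and isometry channels *)

Section TensorChannels.
Variable R : realType.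
Local Notation C := R[i].

Lemma tens_map_id a b : tens_map (@id_map R a) (@id_map R b) = @id_map R (a * b).
Proof.
apply: functional_extensionality => X.
rewrite (tens_map_kraus (@id_map_kraus R a) (@id_map_kraus R b)) /kraus sumr_pair.
by rewrite !big_ord1 /= tensmx11 mul1r scale1r mul1mx adjmx1 mulmx1.
Qed.

Lemma tens_map_uniform_state a b :
  tens_map (@uniform_state R a) (@uniform_state R b) = @uniform_state R (a * b).
Proof.
apply: functional_extensionality => X.
rewrite /tens_map /uniform_state /unif !big_ord1 /mxtrace !big_ord1 !mxE /= mulr1n.
by rewrite !tensmxZl !tensmxZr tensmx11 !scalerA natrM invfM mul1r mulr1.
Qed.

Lemma CPTP_tens_map_kraus n m n' m' (N : chan_map R n m) (M : chan_map R n' m')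
    (I J : finType) (c : I -> C) (A : I -> 'M[C]_(m, n))
    (d : J -> C) (B : J -> 'M[C]_(m', n')) :
  N =1 kraus c A -> M =1 kraus d B -> kraus_cptp c A -> kraus_cptp d B ->
  CPTP (tens_map N M).
Proof.
move=> hN hM hA hB.
exact: CPTP_eq_kraus (tens_map_kraus hN hM) (kraus_cptp_tens hA hB).
Qed.

Lemma CPTP_id_tens_uniform a b : (0 < b)%N ->
  CPTP (tens_map (@id_map R a) (@uniform_state R b)).
Proof.
move=> hb; apply: CPTP_tens_map_kraus (@id_map_kraus R a) (@uniform_state_kraus R b) _ _.
  exact: kraus_cptp_iso (isometry1 R a).
exact: kraus_cptp_uniform.
Qed.

End TensorChannels.

Section ChannelEntropy.
Variable R : realType.
Local Notation C := R[i].
Variable H : forall n m : nat, chan_map R n m -> R.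
Hypothesis hH : channel_entropy H.

Lemma entropy_le n m n' m' (N : chan_map R n m) (M : chan_map R n' m') :
  (0 < n)%N -> (0 < m)%N -> (0 < n')%N -> (0 < m')%N ->
  CPTP N -> CPTP M -> majorizes N M -> H N <= H M.
Proof. by move: hH => [_ hmono _ _]; apply: hmono. Qed.

Lemma entropy_tens n m n' m' (N : chan_map R n m) (M : chan_map R n' m') :
  (0 < n)%N -> (0 < m)%N -> (0 < n')%N -> (0 < m')%N -> CPTP N -> CPTP M ->
  H (tens_map N M) = H N + H M.
Proof. by move: hH => [_ _ htens _]; apply: htens. Qed.

Lemma entropy_uniform_qubit : H (@uniform_state R 2) = 1.
Proof. by case: hH. Qed.

Lemma entropy_id_mul a b : (0 < a)%N -> (0 < b)%N ->
  H (@id_map R (a * b)) = H (@id_map R a) + H (@id_map R b).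
Proof. by move=> ha hb; rewrite -tens_map_id entropy_tens //; apply: CPTP_id. Qed.

Lemma entropy_id_antitone a b : (0 < b)%N -> (b <= a)%N ->
  H (@id_map R a) <= H (@id_map R b).
Proof.
move=> hb; rewrite leq_eqVlt => /orP [/eqP -> //|hba].
have ha : (0 < a)%N by apply: ltn_trans hba.
by apply: entropy_le => //; [exact: CPTP_id | exact: CPTP_id | exact: majorizes_id_id].
Qed.

Lemma entropy_iso_chan n m (V : 'M[C]_(m, n)) : (0 < n)%N -> is_isometry V ->
  H (iso_chan V) = H (@id_map R n).
Proof.
move=> hn hV; have hm : (0 < m)%N := leq_trans hn (isometry_leq hV).
have [cV cid] := (CPTP_iso_chan hV, @CPTP_id R n).
apply/eqP; rewrite eq_le !entropy_le //.
  exact: majorizes_id_iso_chan.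
exact: majorizes_iso_chan_id.
Qed.

Lemma entropy_uniform_ququart : H (@uniform_state R (2 * 2)) = 1 + 1.
Proof.
change (@H (1 * 1) (2 * 2) (@uniform_state R (2 * 2)) = 1 + 1).
rewrite -tens_map_uniform_state entropy_tens ?entropy_uniform_qubit //.
all: exact: CPTP_uniform_state.
Qed.

End ChannelEntropy.

(** * Bell states, teleportation and the Bell twirl *)

(* Entry tables indexed by [b < 4]: the [bell_left b] are an orthogonal basis
   of the real 2x2 matrices, each [bell_left b *t bell_right b] fixes the
   maximally entangled state [bell], and [tele_corr b] (a scaled orthogonal
   matrix) is the teleportation correction for Bell outcome [b]. *)
Definition bell_left_tbl (b i j : nat) : int :=
  match b, i, j with
  | 0, 0, 0 => 1 | 0, 1, 1 => 1
  | 1, 0, 1 => 1 | 1, 1, 0 => 1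
  | 2, 0, 0 => 1 | 2, 1, 1 => -1
  | 3, 0, 1 => -1 | 3, 1, 0 => 1
  | _, _, _ => 0 end.

Definition bell_right_tbl (b i j : nat) : int :=
  match b, i, j with
  | 0, 0, 0 => 1 | 0, 1, 1 => 1
  | 1, 0, 0 => -1 | 1, 1, 1 => 1
  | 2, 0, 1 => 1 | 2, 1, 0 => 1
  | 3, 0, 1 => -1 | 3, 1, 0 => 1
  | _, _, _ => 0 end.

Definition bell_tbl (k : nat) : int :=
  match k with 0 => 1 | 1 => 1 | 2 => -1 | 3 => 1 | _ => 0 end.

Definition tele_corr_tbl (b i j : nat) : int :=
  match b, i, j with
  | 0, 0, 0 => 1 | 0, 0, 1 => 1 | 0, 1, 0 => -1 | 0, 1, 1 => 1
  | 1, 0, 0 => -1 | 1, 0, 1 => 1 | 1, 1, 0 => 1 | 1, 1, 1 => 1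
  | 2, 0, 0 => 1 | 2, 0, 1 => 1 | 2, 1, 0 => 1 | 2, 1, 1 => -1
  | 3, 0, 0 => 1 | 3, 0, 1 => -1 | 3, 1, 0 => 1 | 3, 1, 1 => 1
  | _, _, _ => 0 end.

Section Bell.
Variable R : realType.
Local Notation C := R[i].

Definition bell_left (b : nat) : 'M[C]_2 := \matrix_(i, j) (bell_left_tbl b i j)%:~R.
Definition bell_right (b : nat) : 'M[C]_2 := \matrix_(i, j) (bell_right_tbl b i j)%:~R.
Definition bell : 'M[C]_(2 * 2, 1) := \matrix_(i, j) ((bell_tbl i)%:~R / 2).
(* [bell_row b] is [bell_left b] read as a row vector. *)
Definition bell_row (b : nat) : 'M[C]_(1, 2 * 2) :=
  \matrix_(i, j) (bell_left_tbl b (j %/ 2) (j %% 2))%:~R.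
Definition tele_corr (b : nat) : 'M[C]_2 := \matrix_(i, j) (tele_corr_tbl b i j)%:~R.

Lemma two_neq0 : (2 : C) != 0. Proof. by rewrite pnatr_eq0. Qed.

Lemma conj_inv2 : (2^-1 : C)^* = 2^-1.
Proof. by rewrite fmorphV rmorph_nat. Qed.

Ltac conj_simpl :=
  rewrite ?(rmorphM, rmorphD, rmorphN, fmorphV, rmorph_int, rmorph_nat, rmorph1, rmorph0).

(* Turn the entries of a generic 2x2 matrix into ring atoms. *)
Lemma mx2_entries (t : 'M[C]_2) :
  exists tf : nat -> nat -> C, forall i j : 'I_2, t i j = tf i j.
Proof. by exists (fun i j => t (inord i) (inord j)) => i j; rewrite !inord_val. Qed.

Lemma bell_left_unitary (b : 'I_4) : adjmx (bell_left b) *m bell_left b = 1%:M.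
Proof.
apply/matrixP => i j.
have := ltn_ord i; have := ltn_ord j; have := ltn_ord b.
case: b => [[|[|[|[|b]]]] Hb] //=; case: i => [[|[|i]] Hi] //=;
  case: j => [[|[|j]] Hj] //= _ _ _;
  rewrite !mxE /= !big_ord_recr !big_ord0 /= !mxE /=; conj_simpl; ring.
Qed.

Lemma bell_right_unitary (b : 'I_4) : adjmx (bell_right b) *m bell_right b = 1%:M.
Proof.
apply/matrixP => i j.
have := ltn_ord i; have := ltn_ord j; have := ltn_ord b.
case: b => [[|[|[|[|b]]]] Hb] //=; case: i => [[|[|i]] Hi] //=;
  case: j => [[|[|j]] Hj] //= _ _ _;
  rewrite !mxE /= !big_ord_recr !big_ord0 /= !mxE /=; conj_simpl; ring.
Qed.

Lemma tele_corr_orth (b : 'I_4) : adjmx (tele_corr b) *m tele_corr b = 2 *: 1%:M.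
Proof.
apply/matrixP => i j.
have := ltn_ord i; have := ltn_ord j; have := ltn_ord b.
case: b => [[|[|[|[|b]]]] Hb] //=; case: i => [[|[|i]] Hi] //=;
  case: j => [[|[|j]] Hj] //= _ _ _;
  rewrite !mxE /= !big_ord_recr !big_ord0 /= !mxE /=; conj_simpl; ring.
Qed.

Lemma tele_corr_orthC (b : 'I_4) : tele_corr b *m adjmx (tele_corr b) = 2 *: 1%:M.
Proof.
have h : (2^-1 *: adjmx (tele_corr b)) *m tele_corr b = 1%:M.
  by rewrite -scalemxAl tele_corr_orth scalerA mulVf ?two_neq0 ?scale1r.
have := mulmx1C h; rewrite -scalemxAr => <-.
by rewrite scalerA mulfV ?two_neq0 ?scale1r.
Qed.

Lemma bell_left_twirl (t : 'M[C]_2) :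
  \sum_(b < 4) bell_left b *m t *m adjmx (bell_left b) = (2 * \tr t) *: 1%:M.
Proof.
have [tf tE] := mx2_entries t.
apply/matrixP => i j.
rewrite /mxtrace !big_ord_recr big_ord0 /= !mxE !big_ord_recr !big_ord0 /=.
have := ltn_ord i; have := ltn_ord j.
case: i => [[|[|i]] Hi] //=; case: j => [[|[|j]] Hj] //= _ _;
  rewrite !mxE /= !big_ord_recr !big_ord0 /= !mxE /= !tE /=; conj_simpl; ring.
Qed.

Lemma bell_isometry : is_isometry bell.
Proof.
apply/matrixP => i j; rewrite !ord1.
rewrite !mxE /= !big_ord_recr !big_ord0 /= !mxE /=; conj_simpl.
by field.
Qed.

Lemma bell_invariant (b : 'I_4) : (bell_left b *t bell_right b) *m bell = bell.
Proof.
apply/matrixP => i j; rewrite [j]ord1.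
have := ltn_ord i; have := ltn_ord b.
case: b => [[|[|[|[|b]]]] Hb] //=; case: i => [[|[|[|[|i]]]] Hi] //= _ _;
  rewrite !mxE /= !big_ord_recr !big_ord0 /= !mxE /=; by field.
Qed.

Lemma bell_row_complete : \sum_(b < 4) adjmx (bell_row b) *m bell_row b = 2 *: 1%:M.
Proof.
rewrite !big_ord_recr big_ord0 /=; apply/matrixP => i j.
have := ltn_ord i; have := ltn_ord j.
case: i => [[|[|[|[|i]]]] Hi] //=; case: j => [[|[|[|[|j]]]] Hj] //= _ _;
  rewrite !mxE /= !big_ord_recr !big_ord0 /= !mxE /=; conj_simpl; ring.
Qed.

Lemma bell_row_trace (b : 'I_4) (t : 'M[C]_2) :
  bell_row b *m (t *t (1%:M : 'M[C]_2)) *m adjmx (bell_row b) = (\tr t)%:M.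
Proof.
have [tf tE] := mx2_entries t.
apply/matrixP => i j; rewrite !ord1 /mxtrace !big_ord_recr big_ord0 /=.
have := ltn_ord b.
case: b => [[|[|[|[|b]]]] Hb] //= _;
  do 4 (rewrite ?mxE ?big_ord_recr ?big_ord0 /=); rewrite !tE /=; conj_simpl; ring.
Qed.

(* Teleportation: the Bell measurement outcome [b] on the input qubit and the
   left half of [bell], followed by the correction [tele_corr b] on the right
   half. *)
Definition tele_kraus (b : nat) : 'M[C]_(1 * 2, (2 * 2) * 2) :=
  2^-1 *: (bell_row b *t tele_corr b).

Lemma tele_kraus_bell (b : 'I_4) :
  (tele_kraus b : 'M[C]_(2 * 1, 2 * (2 * 2))) *m (1%:M *t bell) = 2^-1 *: 1%:M.
Proof.
apply/matrixP => i j.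
have := ltn_ord i; have := ltn_ord j; have := ltn_ord b.
case: b => [[|[|[|[|b]]]] Hb] //=; case: i => [[|[|i]] Hi] //=;
  case: j => [[|[|j]] Hj] //= _ _ _;
  rewrite !mxE /= !big_ord_recr !big_ord0 /= !mxE /=; by field.
Qed.

End Bell.

Section Teleportation.
Variable R : realType.
Local Notation C := R[i].

Lemma tele_kraus_complete :
  \sum_(b < 4) adjmx (tele_kraus R b) *m tele_kraus R b = 1%:M.
Proof.
have e (b : 'I_4) : adjmx (tele_kraus R b) *m tele_kraus R b
                    = (2^-1 : C) *: ((adjmx (bell_row R b) *m bell_row R b) *t 1%:M).
  rewrite /tele_kraus adjmxZ conj_inv2 adjmx_tens -scalemxAl -scalemxAr scalerA.
  rewrite tensmx_mul tele_corr_orth tensmxZr scalerA; congr (_ *: _).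
  by field.
rewrite (eq_bigr _ (fun b _ => e b)) -scaler_sumr -tensmx_suml bell_row_complete.
by rewrite tensmxZl scalerA mulVf ?two_neq0 // scale1r tensmx11.
Qed.

Lemma tele_kraus_mix (b : 'I_4) (t : 'M[C]_2) :
  (tele_kraus R b : 'M[C]_(2 * 1, 2 * (2 * 2))) *m (t *t unif R (2 * 2))
    *m adjmx (tele_kraus R b)
  = (8^-1 * \tr t) *: 1%:M.
Proof.
have tA := tensmx1A 2 2 t; rewrite castmx_id_dep in tA.
rewrite /unif tensmxZr -tA -scalemxAr -scalemxAl.
rewrite /tele_kraus adjmxZ conj_inv2 adjmx_tens -scalemxAr -scalemxAl scalerA -scalemxAl scalerA.
rewrite (@tensmx_mul _ 1 (2 * 2) 2 2 (2 * 2) 2 (bell_row R b) (tele_corr R b) (t *t 1%:M) 1%:M).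
rewrite (@tensmx_mul _ 1 (2 * 2) 2 2 1 2 (bell_row R b *m (t *t 1%:M)) (tele_corr R b *m 1%:M)
   (adjmx (bell_row R b)) (adjmx (tele_corr R b))).
rewrite mulmx1 bell_row_trace tele_corr_orthC.
rewrite -[(\tr t)%:M]scalemx1 tensmxZl tensmxZr tensmx11 !scalerA; congr (_ *: _).
by field.
Qed.

Definition tele_decoder_op (p : 'I_4 * 'I_2) : 'M[C]_(2 * 2, 2 * (2 * 2)) :=
  ((1%:M : 'M[C]_2) *t (delta_mx p.2 0 : 'M[C]_(2, 1)))
    *m (tele_kraus R p.1 : 'M[C]_(2 * 1, 2 * (2 * 2))).

(* Teleport the memory qubit through [bell], then append a uniformly random bit. *)
Definition tele_decoder := kraus (fun _ : 'I_4 * 'I_2 => (2^-1 : C)) tele_decoder_op.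

Lemma kraus_cptp_tele_decoder :
  kraus_cptp (fun _ : 'I_4 * 'I_2 => (2^-1 : C)) tele_decoder_op.
Proof.
split=> [_|]; first by rewrite invr_ge0 ler0n.
rewrite sumr_pair -[RHS]tele_kraus_complete; apply: eq_bigr => b _.
under eq_bigr => c _ do
  rewrite /tele_decoder_op /= adjmxM !mulmxA -(mulmxA (adjmx _)) tens1_delta_col_dot eqxx
          scale1r mulmx1.
by rewrite -scaler_suml sumr_inv_nat // scale1r.
Qed.

Lemma tele_decoder_mix (tau : 'M[C]_2) : density tau ->
  tele_decoder (tau *t unif R (2 * 2)) = unif R (2 * 2).
Proof.
move=> [_ htr]; rewrite /tele_decoder /kraus sumr_pair.
under eq_bigr => b _ do under eq_bigr => c _ do
  rewrite /tele_decoder_op adjmxM !mulmxA -(mulmxA _ (tele_kraus R b))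
          -(mulmxA _ (tele_kraus R b *m _)) tele_kraus_mix -scalemxAr -scalemxAl mulmx1
          tens1_delta_col_outer htr scalerA.
under eq_bigr => b _ do rewrite -scaler_sumr -tensmx_sumr sum_delta_col_outer tensmx11.
rewrite sumr_const card_ord -scaler_nat scalerA /unif; congr (_ *: _).
by field.
Qed.

Lemma tele_decoder_bell X :
  superchan_apply (1%:M : 'M[C]_(2 * 1)) tele_decoder (iso_chan (bell R)) X
  = tens_map (@id_map R 2) (@uniform_state R 2) X.
Proof.
rewrite (superchan_apply_kraus _ X (iso_chan_kraus (bell R)) (frefl tele_decoder)).
rewrite (tens_map_kraus (@id_map_kraus R 2) (@uniform_state_kraus R 2)) /kraus.
rewrite !sumr_pair big_ord1.
have e (b : 'I_4) (c : 'I_2) : tele_decoder_op (b, c) *m (1%:M *t bell R) *m 1%:M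
    = 2^-1 *: ((1%:M : 'M[C]_2) *t (delta_mx c 0 : 'M[C]_(2, 1))).
  by rewrite mulmx1 /tele_decoder_op -mulmxA tele_kraus_bell -scalemxAr mulmx1.
under eq_bigr => b _ do under eq_bigr => c _ do
  rewrite big_ord1 e mulr1 adjmxZ conj_inv2 -scalemxAr -!scalemxAl !scalerA.
rewrite sumr_const card_ord -scaler_nat scaler_sumr; apply: eq_bigr => c _.
rewrite scalerA /=; congr (_ *: _).
by field.
Qed.

Lemma majorizes_bell_id_tens_uniform :
  majorizes (iso_chan (bell R)) (tens_map (@id_map R 2) (@uniform_state R 2)).
Proof.
apply: majorizes_of_same.
exists 2%N, (1%:M : 'M[C]_(2 * 1)), tele_decoder; split=> [|X]; last first.
  by rewrite tele_decoder_bell.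
split; last exact: tele_decoder_mix.
apply: minimal_realization_dim => //; split=> //; first exact: isometry1.
exact: CPTP_kraus kraus_cptp_tele_decoder.
Qed.

End Teleportation.

Section BellTwirl.
Variable R : realType.
Local Notation C := R[i].

Definition twirl_unitary (g : nat) : 'M[C]_(2 * 2) := bell_left R g *t bell_right R g.

Definition bell_twirl : chan_map R (2 * 2) (2 * 2) :=
  kraus (fun _ : 'I_(2 * 2) => (2 * 2)%:R^-1) twirl_unitary.

Lemma twirl_unitary_unitary (g : 'I_(2 * 2)) :
  adjmx (twirl_unitary g) *m twirl_unitary g = 1%:M.
Proof.
by rewrite /twirl_unitary adjmx_tens tensmx_mul bell_left_unitary bell_right_unitary tensmx11.
Qed.

Lemma twirl_unitary_conj (g : 'I_(2 * 2)) (t : 'M[C]_2) :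
  twirl_unitary g *m (t *t (1%:M : 'M[C]_2)) *m adjmx (twirl_unitary g)
  = (bell_left R g *m t *m adjmx (bell_left R g)) *t 1%:M.
Proof.
rewrite /twirl_unitary adjmx_tens !tensmx_mul mulmx1.
by rewrite (mulmx1C (bell_right_unitary R g)).
Qed.

Lemma kraus_cptp_bell_twirl :
  kraus_cptp (fun _ : 'I_(2 * 2) => ((2 * 2)%:R^-1 : C)) twirl_unitary.
Proof.
split=> [_|]; first by rewrite invr_ge0 ler0n.
under eq_bigr => g _ do rewrite twirl_unitary_unitary.
by rewrite -scaler_suml sumr_inv_nat // scale1r.
Qed.

Lemma majorizes_bell_twirl_id : majorizes bell_twirl (@id_map R 1).
Proof.
rewrite /majorizes /=; exists (bell R); split; first exact: bell_isometry.
apply: majorizes_same_comp_iso (frefl bell_twirl) (bell_isometry R) _ => X.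
rewrite /bell_twirl /kraus /iso_chan /id_map /twirl_unitary.
under eq_bigr => g _ do rewrite !mulmxA bell_invariant -mulmxA -adjmxM bell_invariant.
by rewrite -scaler_suml sumr_inv_nat // scale1r.
Qed.

Definition register_read (g : 'I_(2 * 2)) : 'M[C]_(2 * (2 * 2), 2 * 1) :=
  (1%:M : 'M[C]_2) *t (delta_mx g 0 : 'M[C]_(2 * 2, 1)).

Definition twirl_append (g : 'I_(2 * 2)) (c : 'I_2) : 'M[C]_((2 * 2) * 2, (2 * 2) * 1) :=
  twirl_unitary g *t (delta_mx c 0 : 'M[C]_(2, 1)).

Definition twirl_decoder_op (p : 'I_(2 * 2) * 'I_2) : 'M[C]_((2 * 2) * 2, 2 * ((2 * 2) * 2)) :=
  twirl_append p.1 p.2 *m adjmx ((1%:M : 'M[C]_2) *t register_read p.1).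

(* Read the register value [g], apply [twirl_unitary g] to memory and input,
   and append a uniformly random bit. *)
Definition twirl_decoder := kraus (fun _ : 'I_(2 * 2) * 'I_2 => (2^-1 : C)) twirl_decoder_op.

Lemma twirl_append_isometry g c : adjmx (twirl_append g c) *m twirl_append g c = 1%:M.
Proof.
rewrite /twirl_append adjmx_tens.
rewrite (@tensmx_mul _ (2 * 2) (2 * 2) 1 2 (2 * 2) 1 (adjmx (twirl_unitary g))
   (adjmx (delta_mx c 0 : 'M[C]_(2, 1))) (twirl_unitary g) (delta_mx c 0)).
by rewrite twirl_unitary_unitary delta_col_dot eqxx scale1r tensmx11.
Qed.

Lemma kraus_cptp_twirl_decoder :
  kraus_cptp (fun _ : 'I_(2 * 2) * 'I_2 => (2^-1 : C)) twirl_decoder_op.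
Proof.
split=> [_|]; first by rewrite invr_ge0 ler0n.
have e p : adjmx (twirl_decoder_op p) *m twirl_decoder_op p
   = (1%:M : 'M[C]_2) *t ((1%:M : 'M[C]_2) *t
        (delta_mx p.1 0 *m adjmx (delta_mx p.1 0 : 'M[C]_(2 * 2, 1)))).
  rewrite /twirl_decoder_op adjmxM adjmxK !mulmxA -(mulmxA _ (adjmx (twirl_append _ _))).
  rewrite twirl_append_isometry mulmx1 adjmx_tens adjmx1.
  rewrite (@tensmx_mul _ 2 2 (2 * (2 * 2)) (2 * 1) 2 (2 * (2 * 2)) 1%:M (register_read p.1)
     1%:M (adjmx (register_read p.1))).
  by rewrite mulmx1 tens1_delta_col_outer.
rewrite sumr_pair; under eq_bigr => g _ do under eq_bigr => c _ do rewrite e /=.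
under eq_bigr => g _ do rewrite -scaler_suml sumr_inv_nat // scale1r.
(* The dimensions must be spelled out for the tensor sums to typecheck. *)
have h : \sum_(g < 2 * 2) ((1%:M : 'M[C]_2) *t ((1%:M : 'M[C]_2) *t
   (delta_mx g 0 *m adjmx (delta_mx g 0 : 'M[C]_(2 * 2, 1))))) = 1%:M.
  by rewrite -!tensmx_sumr sum_delta_col_outer !tensmx11.
exact: h.
Qed.

Lemma twirl_decoder_op_read p (g : 'I_(2 * 2)) :
  twirl_decoder_op p *m ((1%:M : 'M[C]_2) *t register_read g)
  = (p.1 == g)%:R *: (twirl_append p.1 p.2 : 'M[C]_((2 * 2) * 2, 2 * (2 * 1))).
Proof.
rewrite /twirl_decoder_op -mulmxA adjmx_tens adjmx1.
rewrite (@tensmx_mul _ 2 2 (2 * 1) (2 * (2 * 2)) 2 (2 * 1) 1%:M (adjmx (register_read p.1))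
   1%:M (register_read g)).
by rewrite mul1mx /register_read tens1_delta_col_dot tensmxZr tensmx11 -scalemxAr mulmx1.
Qed.

Lemma twirl_decoder_op_conj p (t : 'M[C]_2) :
  twirl_decoder_op p *m (t *t (1%:M : 'M[C]_((2 * 2) * 2))) *m adjmx (twirl_decoder_op p)
  = ((bell_left R p.1 *m t *m adjmx (bell_left R p.1)) *t 1%:M) *t
      (delta_mx p.2 0 *m adjmx (delta_mx p.2 0 : 'M[C]_(2, 1))).
Proof.
have read : adjmx ((1%:M : 'M[C]_2) *t register_read p.1) *m (t *t (1%:M : 'M[C]_(2 * (2 * 2))))
              *m ((1%:M : 'M[C]_2) *t register_read p.1) = t *t (1%:M : 'M[C]_(2 * 1)).
  rewrite adjmx_tens adjmx1.
  rewrite (@tensmx_mul _ 2 2 (2 * 1) (2 * (2 * 2)) 2 (2 * (2 * 2)) 1%:M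
     (adjmx (register_read p.1)) t 1%:M).
  rewrite (@tensmx_mul _ 2 2 (2 * 1) (2 * (2 * 2)) 2 (2 * 1) (1%:M *m t)
     (adjmx (register_read p.1) *m 1%:M) 1%:M (register_read p.1)).
  by rewrite mul1mx !mulmx1 /register_read tens1_delta_col_dot eqxx scale1r.
have tA := tensmx1A 2 1 t; rewrite castmx_id_dep in tA.
have -> : twirl_decoder_op p *m (t *t (1%:M : 'M[C]_((2 * 2) * 2))) *m adjmx (twirl_decoder_op p)
   = twirl_append p.1 p.2 *m (adjmx ((1%:M : 'M[C]_2) *t register_read p.1)
       *m (t *t (1%:M : 'M[C]_(2 * (2 * 2)))) *m ((1%:M : 'M[C]_2) *t register_read p.1))
       *m adjmx (twirl_append p.1 p.2).
  by rewrite /twirl_decoder_op adjmxM adjmxK !mulmxA.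
rewrite read -tA /twirl_append adjmx_tens.
rewrite (@tensmx_mul _ (2 * 2) (2 * 2) 2 1 (2 * 2) 1 (twirl_unitary p.1) (delta_mx p.2 0)
   (t *t 1%:M) 1%:M).
rewrite (@tensmx_mul _ (2 * 2) (2 * 2) 2 1 (2 * 2) 2 (twirl_unitary p.1 *m (t *t 1%:M))
   (delta_mx p.2 0 *m 1%:M) (adjmx (twirl_unitary p.1)) (adjmx (delta_mx p.2 0 : 'M[C]_(2, 1)))).
by rewrite twirl_unitary_conj mulmx1.
Qed.

Lemma twirl_decoder_mix (tau : 'M[C]_2) : density tau ->
  twirl_decoder (tau *t unif R ((2 * 2) * 2)) = unif R ((2 * 2) * 2).
Proof.
move=> [_ htr]; rewrite /twirl_decoder /kraus /unif sumr_pair.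
under eq_bigr => g _ do under eq_bigr => c _ do
  rewrite tensmxZr -scalemxAr -scalemxAl twirl_decoder_op_conj scalerA /=.
under eq_bigr => g _ do rewrite -scaler_sumr -tensmx_sumr sum_delta_col_outer.
rewrite -scaler_sumr -!tensmx_suml bell_left_twirl !tensmxZl !tensmx11 scalerA htr.
by congr (_ *: _); field.
Qed.

Lemma twirl_decoder_twirl X :
  superchan_apply (1%:M : 'M[C]_(2 * (2 * 1))) twirl_decoder
    (tens_map (@id_map R 2) (@uniform_state R (2 * 2))) X
  = tens_map bell_twirl (@uniform_state R 2) X.
Proof.
have hN : tens_map (@id_map R 2) (@uniform_state R (2 * 2))
          =1 kraus (fun _ : 'I_(2 * 2) => (2 * 2)%:R^-1) register_read.
  move=> Y; rewrite (tens_map_kraus (@id_map_kraus R 2) (@uniform_state_kraus R (2 * 2))).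
  by rewrite /kraus sumr_pair big_ord1; apply: eq_bigr => g _; rewrite mul1r.
rewrite (superchan_apply_kraus _ X hN (frefl twirl_decoder)).
rewrite (tens_map_kraus (frefl bell_twirl) (@uniform_state_kraus R 2)) /kraus.
apply: eq_bigr => p _; rewrite (bigD1 p.1) //= big1 ?addr0.
  by rewrite mulmx1 twirl_decoder_op_read eqxx scale1r mulrC.
move=> g hg; rewrite mulmx1 twirl_decoder_op_read eq_sym (negbTE hg) scale0r.
by rewrite mul0mx adjmx0 mulmx0 scaler0.
Qed.

Lemma majorizes_id_uniform_bell_twirl :
  majorizes (tens_map (@id_map R 2) (@uniform_state R (2 * 2)))
            (tens_map bell_twirl (@uniform_state R 2)).
Proof.
apply: majorizes_of_same.
exists 2%N, (1%:M : 'M[C]_(2 * (2 * 1))), twirl_decoder; split=> [|X]; last first.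
  by rewrite twirl_decoder_twirl.
split; last exact: twirl_decoder_mix.
apply: minimal_realization_dim => //; split=> //; first exact: isometry1.
exact: CPTP_kraus kraus_cptp_twirl_decoder.
Qed.

End BellTwirl.

(** * The entropy of the qubit identity channel *)

Section QubitEntropy.
Variable R : realType.
Variable H : forall n m : nat, chan_map R n m -> R.
Hypothesis hH : channel_entropy H.

Lemma entropy_id1 : H (@id_map R 1) = 0.
Proof. exact: additive_at1 (entropy_id_mul hH). Qed.

Lemma entropy_id_qubit_ge : -1 <= H (@id_map R 2).
Proof.
have : H (iso_chan (bell R)) <= H (tens_map (@id_map R 2) (@uniform_state R 2)).
  apply: entropy_le => //; first exact: CPTP_iso_chan (bell_isometry R).
    exact: CPTP_id_tens_uniform.
  exact: majorizes_bell_id_tens_uniform.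
rewrite (entropy_iso_chan hH) ?entropy_id1 //; last exact: bell_isometry.
rewrite entropy_tens ?entropy_uniform_qubit //; first lra.
  exact: CPTP_id.
exact: CPTP_uniform_state.
Qed.

Lemma entropy_id_qubit_le : H (@id_map R 2) <= -1.
Proof.
have cTw : CPTP (@bell_twirl R) := CPTP_kraus (kraus_cptp_bell_twirl R).
have : H (@bell_twirl R) <= H (@id_map R 1).
  by apply: entropy_le => //; [exact: CPTP_id | exact: majorizes_bell_twirl_id].
have : H (tens_map (@id_map R 2) (@uniform_state R (2 * 2)))
       <= H (tens_map (@bell_twirl R) (@uniform_state R 2)).
  apply: entropy_le => //; first exact: CPTP_id_tens_uniform.
    apply: (CPTP_tens_map_kraus (frefl (@bell_twirl R)) (@uniform_state_kraus R 2)).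
      exact: kraus_cptp_bell_twirl.
    exact: kraus_cptp_uniform.
  exact: majorizes_id_uniform_bell_twirl.
rewrite !entropy_tens ?entropy_uniform_qubit ?entropy_uniform_ququart ?entropy_id1 //.
- by lra.
all: by [exact: CPTP_id | exact: CPTP_uniform_state].
Qed.

Lemma entropy_id_qubit : H (@id_map R 2) = -1.
Proof. by apply/eqP; rewrite eq_le entropy_id_qubit_le entropy_id_qubit_ge. Qed.

End QubitEntropy.

Theorem theorem17 (R : realType)
  (H : forall n m : nat, chan_map R n m -> R) (hH : channel_entropy H)
  (n m : nat) (V : 'M[R[i]]_(m, n)) :
  (0 < n)%N -> is_isometry V ->
  H n m (iso_chan V) = - log2 (n%:R : R) /\
  ((1 < n)%N -> H n m (iso_chan V) < 0).
Proof.
move=> hn hV.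
have f_log := additive_antitone_log2 (entropy_id_mul hH) (entropy_id_antitone hH)
  (entropy_id_qubit hH).
rewrite (entropy_iso_chan hH hn hV) f_log //; split=> // h1n.
by rewrite oppr_lt0 /log2 divr_gt0 // ln_gt0 // ltr1n.
Qed.
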